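(* Let $d\ge1$. Let $G_A=(V_A,E_A)$ with configuration $\mathbf{p}^A$ and $G_B=(V_B,E_B)$ with configuration $\mathbf{p}^B$ be frameworks in general position in $\mathbb{R}^d$, with $V_C=V_A\cap V_B$ a proper subset of both $V_A$ and $V_B$, $|V_C|\ge d+1$, and $\mathbf{p}^A_i=\mathbf{p}^B_i$ for $i\in V_C$. Let $\Omega_A$, $\Omega_B$ be positive semidefinite stress matrices of nullity $d+1$ of $G_A(\mathbf{p}^A)$, $G_B(\mathbf{p}^B)$, and assume moreover that $G_A(\mathbf{p}^A)$ is infinitesimally rigid. Let $F=\{\{i_k,j_k\}:k=1,\dots,K\}$ be the set of edges of $E_B\setminus E_A$ with both endpoints in $V_C$. Then there is a real symmetric $V_A\times V_A$ matrix $\Omega_{AK}$ which is a stress matrix of the framework with graph $(V_A,E_A\cup F)$ and configuration $\mathbf{p}^A$ and satisfies $(\Omega_{AK})_{i_kj_k}=-(\Omega_B)_{i_kj_k}$ for $k=1,\dots,K$ (its entries are obtained from the rigidity matrix of $G_A(\mathbf{p}^A)$ and the entries of $\Omega_B$ by solving $K$ systems of linear equations); and for a large enough constant $c>0$, the matrix $$\widetilde\Omega_{re}=c\,\widetilde\Omega_A+\widetilde\Omega_{AK}+\widetilde\Omega_B$$ is a positive semidefinite stress matrix of nullity $d+1$ of the edge-reduced framework attachment, i.e. of the framework with graph $(V_A\cup V_B,(E_A\cup E_B)\setminus F)$ and configuration $\mathbf{p}$ where $\mathbf{p}_i=\mathbf{p}^A_i$ ($i\in V_A$), $\mathbf{p}_i=\mathbf{p}^B_i$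 ($i\in V_B$). Here $\widetilde X$ denotes the extension by zeros of a matrix $X$ indexed by $V_A$ or $V_B$ to a matrix indexed by $V_A\cup V_B$.
   Context: A framework $G(\mathbf{p})$ in $\mathbb{R}^d$ is a finite graph $G=(V,E)$ with points $\mathbf{p}_i\in\mathbb{R}^d$; general position means any $d+1$ distinct vertices have affinely independent points. A stress matrix of $G(\mathbf{p})$ is a real $|V|\times|V|$ matrix $\Omega$ with: $\Omega_{ij}=\Omega_{ji}$; $\Omega_{ij}=0$ whenever $i\ne j$ and $\{i,j\}\notin E$; $\sum_j\Omega_{ij}=0$ and $\sum_j\Omega_{ij}\mathbf{p}_j=0$ for all $i$. Nullity means $\dim\ker$. The rigidity matrix $df$ of $G(\mathbf{p})$ is the $|E|\times |V|d$ matrix whose row for edge $\{i,j\}$ has $\mathbf{p}_i-\mathbf{p}_j$ in the $d$ columns of vertex $i$, $\mathbf{p}_j-\mathbf{p}_i$ in the columns of vertex $j$, and zeros elsewhere; $G(\mathbf{p})$ is infinitesimally rigid if $\operatorname{rank}(df)=|V|d-\binom{d+1}{2}$. *)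

From HB Require Import structures.
From mathcomp Require Import all_boot all_order all_algebra.
From mathcomp Require Import reals.

Set Implicit Arguments.
Unset Strict Implicit.
Unset Printing Implicit Defensive.

Import Order.TTheory GRing.Theory Num.Theory.
Local Open Scope ring_scope.

Section Frameworks.
Variables (R : realType) (T : finType) (d : nat).

(* A matrix "indexed by" a finite vertex set S : {set T} is a
   'M_#|S| matrix whose index a : 'I_#|S| stands for vertex [vtx a]. *)
Definition vtx (S : {set T}) (a : 'I_#|S|) : T := enum_val a.

(* entry (i,j) (i, j vertices) of a matrix indexed by S; 0 if i or j not in S *)
Definition entry (S : {set T}) (X : 'M[R]_#|S|) (i j : T) : R :=
  \sum_(a < #|S|) \sum_(b < #|S|)
     (if (vtx a == i) && (vtx b == j) then X a b else 0).

Definition ext (S U : {set T}) (X : 'M[R]_#|S|) : 'M[R]_#|U| :=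
  \matrix_(a < #|U|, b < #|U|) entry X (vtx a) (vtx b).

Definition is_graph (S : {set T}) (E : {set {set T}}) : Prop :=
  forall e, e \in E -> (e \subset S) /\ #|e| = 2%N.

Definition aff_indep (q : 'I_d.+1 -> 'rV[R]_d) : Prop :=
  row_free (\matrix_(k < d.+1) row_mx (q k) (1 : 'rV[R]_1)).

Definition general_position (S : {set T}) (p : T -> 'rV[R]_d) : Prop :=
  forall f : 'I_d.+1 -> T, injective f -> (forall k, f k \in S) ->
    aff_indep (fun k => p (f k)).

Definition is_stress (S : {set T}) (E : {set {set T}}) (p : T -> 'rV[R]_d)
    (Om : 'M[R]_#|S|) : Prop :=
  [/\ Om^T = Om,
      (forall a b : 'I_#|S|, a != b -> [set vtx a; vtx b] \notin E -> Om a b = 0),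
      (forall a, \sum_(b < #|S|) Om a b = 0) &
      (forall a, \sum_(b < #|S|) Om a b *: p (vtx b) = 0)].

Definition psd n (M : 'M[R]_n) : Prop :=
  forall v : 'rV[R]_n, 0 <= (v *m M *m v^T) 0 0.

Definition nullity n (M : 'M[R]_n) : nat := \rank (kermx M).

(* rigidity matrix: row for edge e={i,j} has p_i - p_j in the d columns of
   vertex i, p_j - p_i in those of j, zeros elsewhere *)
Definition rigidity_matrix (S : {set T}) (E : {set {set T}}) (p : T -> 'rV[R]_d)
  : 'M[R]_(#|E|, #|S| * d) :=
  \matrix_(r < #|E|)
    mxvec (\matrix_(a < #|S|, k < d)
      (if vtx a \in (enum_val r : {set T})
       then \sum_(u in (enum_val r : {set T}) :\ vtx a) (p (vtx a) - p u) 0 k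
       else 0)).

Definition inf_rigid (S : {set T}) (E : {set {set T}}) (p : T -> 'rV[R]_d) : Prop :=
  \rank (rigidity_matrix S E p) = (#|S| * d - 'C(d.+1, 2))%N.

End Frameworks.

Arguments is_stress {R T d} S E p Om.

From HB Require Import structures.
From mathcomp Require Import all_boot all_order all_algebra.
From mathcomp Require Import reals.
From mathcomp Require Import ring lra zify.

Set Implicit Arguments.
Unset Strict Implicit.
Unset Printing Implicit Defensive.

Import Order.TTheory GRing.Theory Num.Theory.
Local Open Scope ring_scope.

(* The equilibrium conditions of a stress [Om] of [(S, p)] say [Om Z = 0] for
   the affine configuration matrix [Z = [p | 1]]; in general position [Z] has
   rank [d + 1], so nullity [d + 1] means [ker Om = col Z].
   Infinitesimal rigidity of [G_A(pA)] makes the trivial motions span the kernel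
   of its rigidity matrix, so every symmetric load with zero row sums, in
   particular the one carrying [- OmB] on the edges of [F], is resolved by a
   stress on [EA]; this is [OmAK].  As [ker OmA <= ker OmAK], the matrix
   [c OmA + OmAK] is positive semidefinite with kernel [col Z_A] for large [c].
   Finally, a vector in the kernel of the sum of two positive semidefinite
   matrices is in both kernels, i.e. affine on [VA] and on [VB]; the two affine
   maps agree on the [d + 1] affinely independent common vertices, so the
   vector is affine on [VA :|: VB], and the nullity is [d + 1]. *)

Notation bform A u v := ((u *m A *m v^T) 0 0).

Section KernelDuality.
Variable F : fieldType.

Lemma submx_kermx_tr m p n (B : 'M[F]_(m, n)) (C : 'M[F]_(p, n)) :
  (kermx B^T <= kermx C^T)%MS -> (C <= B)%MS.
Proof.
move=> /sub_kermxP hK; set K := kermx B^T.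
have sCK : (C <= kermx K^T)%MS.
  by apply/sub_kermxP; rewrite -[C]trmxK -trmx_mul hK trmx0.
have sBK : (B <= kermx K^T)%MS.
  by apply/sub_kermxP; rewrite -[B]trmxK -trmx_mul mulmx_ker trmx0.
apply: submx_trans sCK _; rewrite -(mxrank_leqif_sup sBK).2.
by rewrite mxrank_ker mxrank_tr /K mxrank_ker mxrank_tr subKn // rank_leq_col.
Qed.

Lemma mxvec_dot m n (A B : 'M[F]_(m, n)) :
  (mxvec A *m (mxvec B)^T) 0 0 = \tr (A *m B^T).
Proof.
have -> : \tr (A *m B^T) = \sum_i \sum_j A i j * B i j.
  by apply: eq_bigr => i _; rewrite mxE; apply: eq_bigr => j _; rewrite mxE.
rewrite mxE (reindex _ (curry_mxvec_bij _ _)) pair_bigA /=.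
by apply: eq_bigr => -[i j] _; rewrite mxE !mxvecE.
Qed.

End KernelDuality.

Section PositiveSemidefinite.
Variables (R : realType) (n : nat).
Implicit Types (A M W : 'M[R]_n) (u v z : 'rV[R]_n).

Lemma discriminant_le (a b c : R) : 0 <= a ->
  (forall t, 0 <= c + 2 * t * b + t ^+ 2 * a) -> b ^+ 2 <= c * a.
Proof.
move=> a_ge0; have [->|a_neq0] := eqVneq a 0 => h.
  rewrite mulr0; have [->|b_neq0] := eqVneq b 0; first by rewrite expr0n.
  have := h (- (c + 1) / (2 * b)); rewrite mulr0 addr0.
  have -> : 2 * (- (c + 1) / (2 * b)) * b = - (c + 1) by field.
  lra.
have a_gt0 : 0 < a by rewrite lt_def a_neq0.
have := h (- (b / a)); have : b = (b / a) * a by field.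
by move: (b / a) => x ->; nra.
Qed.

Lemma bformC A u v : A^T = A -> bform A u v = bform A v u.
Proof.
move=> sA; rewrite -[in LHS](trmxK (u *m A *m v^T)) mxE.
by rewrite !trmx_mul trmxK sA mulmxA.
Qed.

Lemma bformD A M u v : bform (A + M) u v = bform A u v + bform M u v.
Proof. by rewrite mulmxDr mulmxDl [LHS]mxE. Qed.

Lemma bform_scale_add (a : R) A M u :
  bform (a *: A + M) u u = a * bform A u u + bform M u u.
Proof. by rewrite mulmxDr mulmxDl -scalemxAr -scalemxAl [LHS]mxE mxE. Qed.

Lemma bform_mulmx m (J : 'M[R]_(n, m)) M (v : 'rV[R]_m) :
  bform (J^T *m M *m J) v v = bform M (v *m J^T) (v *m J^T).
Proof. by rewrite trmx_mul trmxK !mulmxA. Qed.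

Lemma mul_tr_delta (w : 'rV[R]_n) j :
  (w *m (delta_mx 0 j : 'rV[R]_n)^T) 0 0 = w 0 j.
Proof. by rewrite trmx_delta -colE mxE. Qed.

Lemma bform_delta A j :
  bform A (delta_mx 0 j : 'rV[R]_n) (delta_mx 0 j : 'rV[R]_n) = A j j.
Proof. by rewrite mul_tr_delta -rowE mxE. Qed.

Lemma psd_cauchy_schwarz A u v : A^T = A -> psd A ->
  bform A u v ^+ 2 <= bform A u u * bform A v v.
Proof.
move=> sA psdA; apply: discriminant_le; first exact: psdA.
move=> t; have := psdA (u + t *: v).
have vAu : v *m A *m u^T = u *m A *m v^T.
  by rewrite [LHS]mx11_scalar [RHS]mx11_scalar bformC.
rewrite linearD /= linearZ /= !mulmxDl !mulmxDr -!scalemxAl -!scalemxAr vAu.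
set x := u *m A *m u^T; set y := u *m A *m v^T; set z := v *m A *m v^T.
by rewrite !mxE; nra.
Qed.

Lemma psd_bform0 A u : A^T = A -> psd A -> bform A u u = 0 -> u *m A = 0.
Proof.
move=> sA psdA uAu0; apply/rowP => j; rewrite [RHS]mxE.
have := psd_cauchy_schwarz u (delta_mx 0 j) sA psdA.
rewrite uAu0 mul0r mul_tr_delta => le0.
by apply/eqP; rewrite -sqrf_eq0 eq_le le0 sqr_ge0.
Qed.

Lemma sqr_le_dot z i : z 0 i ^+ 2 <= (z *m z^T) 0 0.
Proof.
rewrite mxE (bigD1 i) //= mxE -expr2 lerDl.
by apply: sumr_ge0 => k _; rewrite mxE -expr2 sqr_ge0.
Qed.

Lemma bform_ge_abs_sum W z :
  - (\sum_i \sum_j `|W i j|) * (z *m z^T) 0 0 <= bform W z z.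
Proof.
set s := (z *m z^T) 0 0.
have -> : bform W z z = \sum_i \sum_j z 0 i * W i j * z 0 j.
  rewrite mxE; under eq_bigr do rewrite mxE big_distrl /=.
  rewrite exchange_big; apply: eq_bigr => i _; apply: eq_bigr => j _.
  by rewrite mxE.
rewrite mulNr big_distrl -sumrN; apply: ler_sum => i _.
rewrite big_distrl -sumrN; apply: ler_sum => j _.
have key (a b w : R) : a ^+ 2 <= s -> b ^+ 2 <= s -> - (`|w| * s) <= a * w * b.
  move=> as_ bs; have := sqr_ge0 (a + b); have := sqr_ge0 (a - b).
  by case: (leP 0 w) => w0; [rewrite ger0_norm | rewrite ltr0_norm]; nra.
exact: key (sqr_le_dot z i) (sqr_le_dot z j).
Qed.

Lemma psd_image_le_trace A v : A^T = A -> psd A ->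
  ((v *m A) *m (v *m A)^T) 0 0 <= \tr A * bform A v v.
Proof.
move=> sA psdA; rewrite [X in X <= _]mxE /mxtrace mulr_suml; apply: ler_sum => j _.
rewrite [(v *m A)^T _ _]mxE -expr2 -(mul_tr_delta (v *m A) j) mulrC.
by rewrite -(bform_delta A j); apply: psd_cauchy_schwarz.
Qed.

(* The kernel inclusion puts the rows of [M] in the row space of [A], so
   [M = A W A] and [v M v^T >= - K |v A|^2 >= - K (\tr A) (v A v^T)]. *)
Lemma psd_scale_add A M : A^T = A -> M^T = M -> psd A ->
  (kermx A <= kermx M)%MS ->
  exists c1 : R, 0 <= c1 /\ forall c, c1 <= c -> psd (c *: A + M).
Proof.
move=> sA sM psdA kAM.
have /submxP[D defM] : (M <= A)%MS by apply: submx_kermx_tr; rewrite sA sM.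
have AGA : A *m pinvmx A *m A = A by apply: mulmxKpV.
have {D defM} [W defM] : exists W, M = A *m W *m A.
  exists (D^T *m pinvmx A).
  have e : M = M *m pinvmx A *m A by rewrite defM -(mulmxA D A) -(mulmxA D) AGA.
  by rewrite e -{1}sM defM trmx_mul sA !mulmxA.
set K := \sum_i \sum_j `|W i j|.
have K_ge0 : 0 <= K by apply: sumr_ge0 => i _; apply: sumr_ge0 => j _.
have tr_ge0 : 0 <= \tr A.
  by apply: sumr_ge0 => j _; rewrite -(bform_delta A j); apply: psdA.
exists (K * \tr A); split; first exact: mulr_ge0.
move=> c le_c v; rewrite bform_scale_add defM.
have -> : bform (A *m W *m A) v v = bform W (v *m A) (v *m A).
  by rewrite trmx_mul sA !mulmxA.
have := bform_ge_abs_sum W (v *m A); have := psd_image_le_trace v sA psdA.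
have := psdA v; rewrite -/K; move: le_c tr_ge0.
move: (bform W (v *m A) (v *m A)) ((v *m A *m (v *m A)^T) 0 0) (bform A v v) (\tr A).
move=> x y q t le_c t0 q0 yt xy.
have : K * y <= K * (t * q) by exact: ler_wpM2l.
have : (K * t) * q <= c * q by exact: ler_wpM2r.
nra.
Qed.

Lemma kermx_scale_add A M (c1 c : R) : A^T = A -> psd A ->
  psd (c1 *: A + M) -> c1 < c -> (kermx (c *: A + M) <= kermx A)%MS.
Proof.
move=> sA psdA psdM lt_c; apply/row_subP => i; apply/sub_kermxP.
set u := row i _; have : u *m (c *: A + M) = 0 by apply/sub_kermxP; exact: row_sub.
move=> uX0; apply: (psd_bform0 sA psdA).
have := bform_scale_add (c - c1) A (c1 *: A + M) u.
rewrite addrA -scalerDl subrK uX0 mul0mx mxE.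
have := psdA u; have := psdM u; move: (bform A u u) (bform _ u u) => a b b0 a0.
nra.
Qed.
End PositiveSemidefinite.

Section Vertices.
Variables (R : realType) (T : finType).
Implicit Types (S U : {set T}).

Lemma vtx_inj S : injective (@vtx T S).
Proof. exact: enum_val_inj. Qed.

Lemma vtx_in S a : @vtx T S a \in S.
Proof. exact: enum_valP. Qed.

Lemma vtx_onto S x : x \in S -> exists a, @vtx T S a = x.
Proof. by move=> xS; exists (enum_rank_in xS x); apply: enum_rankK_in. Qed.

Lemma entry_vtx S (X : 'M[R]_#|S|) a b : entry X (vtx a) (vtx b) = X a b.
Proof.
have sum_vtx (g : 'I_#|S| -> R) a0 :
    \sum_a1 (if vtx a1 == vtx a0 then g a1 else 0) = g a0.
  rewrite (bigD1 a0) //= eqxx big1 ?addr0 // => a1 a1a0.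
  by case: eqP => // /vtx_inj e; rewrite e eqxx in a1a0.
rewrite /entry -(sum_vtx (X^~ b) a); apply: eq_bigr => a1 _.
case: eqP => _ /=; last by rewrite big1.
by rewrite -(sum_vtx (X a1) b).
Qed.

Lemma entry_out S (X : 'M[R]_#|S|) i j :
  (i \notin S) || (j \notin S) -> entry X i j = 0.
Proof.
move=> ijS; apply: big1 => a _; apply: big1 => b _.
case: eqP => [ai|] //=; case: eqP => [bj|] //=.
by move: ijS; rewrite -ai -bj !vtx_in.
Qed.

Lemma entry_sym S (X : 'M[R]_#|S|) i j : X^T = X -> entry X i j = entry X j i.
Proof.
move=> sX; rewrite /entry exchange_big; apply: eq_bigr => b _; apply: eq_bigr => a _.
by rewrite andbC -{1}sX mxE.
Qed.

Definition sel_mx U m (g : 'I_m -> T) : 'M[R]_(m, #|U|) :=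
  \matrix_(k, a) (g k == vtx a)%:R.

Definition incl_mx S U : 'M[R]_(#|S|, #|U|) := sel_mx U (@vtx T S).

Lemma ext_incl S U (X : 'M[R]_#|S|) : ext U X = (incl_mx S U)^T *m X *m incl_mx S U.
Proof.
apply/matrixP => a b; rewrite !mxE /entry.
under [RHS]eq_bigr do rewrite !mxE big_distrl /=.
rewrite exchange_big; apply: eq_bigr => a' _; apply: eq_bigr => b' _.
by rewrite !mxE; case: eqP; case: eqP; rewrite /= ?mul0r ?mulr0 ?mul1r ?mulr1.
Qed.

Lemma row_sel_mul U m (g : 'I_m -> T) q (Y : 'M[R]_(#|U|, q)) k b :
  vtx b = g k -> row k (sel_mx U g *m Y) = row b Y.
Proof.
move=> gk; rewrite row_mul mulmx_sum_row (bigD1 b) //= !mxE gk eqxx scale1r.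
rewrite big1 ?addr0 // => a ab; rewrite !mxE; case: eqP; last by rewrite scale0r.
by rewrite -gk => /vtx_inj ba; rewrite ba eqxx in ab.
Qed.

Lemma mul_sel_tr U m (g : 'I_m -> T) (u : 'rV[R]_#|U|) k b :
  vtx b = g k -> (u *m (sel_mx U g)^T) 0 k = u 0 b.
Proof.
move=> gk; have := congr1 (fun M : 'M[R]_(1, 1) => M 0 0) (row_sel_mul u^T gk).
by rewrite -[u *m _]trmxK trmx_mul trmxK [LHS]mxE /= !mxE => ->.
Qed.

Lemma sel_incl S U m (g : 'I_m -> T) :
  (forall k, g k \in S) -> sel_mx S g *m incl_mx S U = sel_mx U g.
Proof.
move=> gS; apply/row_matrixP => k; have [b gk] := vtx_onto (gS k).
by rewrite (row_sel_mul _ gk); apply/rowP => j; rewrite !mxE gk.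
Qed.

Lemma ext_scale_add S U (c : R) (X Y : 'M[R]_#|S|) :
  ext U (c *: X + Y) = c *: ext U X + ext U Y.
Proof. by rewrite !ext_incl mulmxDr mulmxDl -scalemxAr -scalemxAl. Qed.

End Vertices.

Section AffineConfiguration.
Variables (R : realType) (T : finType) (d : nat).
Implicit Types (S U C : {set T}) (p q : T -> 'rV[R]_d).

Definition coord_mx S p : 'M[R]_(#|S|, d) := \matrix_(a, k) p (vtx a) 0 k.

Definition affine_mx S p : 'M[R]_(#|S|, d + 1) := row_mx (coord_mx S p) (const_mx 1).

Lemma row_affine_mx S p a : row a (affine_mx S p) = row_mx (p (vtx a)) 1.
Proof.
rewrite row_row_mx; congr row_mx; apply/rowP => k; rewrite !mxE //.
by rewrite ord1.
Qed.

Lemma eq_affine_mx S p q : {in S, p =1 q} -> affine_mx S p = affine_mx S q.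
Proof. by move=> pq; apply/row_matrixP => a; rewrite !row_affine_mx pq ?vtx_in. Qed.

Lemma equilibrium_affine_mxP S p (Om : 'M[R]_#|S|) :
  (forall a, \sum_b Om a b = 0) /\ (forall a, \sum_b Om a b *: p (vtx b) = 0) <->
  Om *m affine_mx S p = 0.
Proof.
rewrite mul_mx_row; split.
- move=> [sum0 eq0]; apply/eqP; rewrite row_mx_eq0.
  apply/andP; split; apply/eqP/matrixP => a k; rewrite !mxE.
    transitivity ((\sum_b Om a b *: p (vtx b)) 0 k); last by rewrite eq0 mxE.
    by rewrite summxE; apply: eq_bigr => b _; rewrite !mxE.
  by rewrite -[RHS](sum0 a); apply: eq_bigr => b _; rewrite !mxE mulr1.
- move=> /eqP; rewrite row_mx_eq0 => /andP[/eqP eq0 /eqP sum0]; split=> a.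
    transitivity ((Om *m const_mx 1 : 'M[R]_(#|S|, 1)) a 0); last by rewrite sum0 mxE.
    by rewrite mxE; apply: eq_bigr => b _; rewrite !mxE mulr1.
  apply/rowP => k; transitivity ((Om *m coord_mx S p) a k); last by rewrite eq0 !mxE.
  by rewrite summxE mxE; apply: eq_bigr => b _; rewrite !mxE.
Qed.

Lemma sel_affine_mx S p m (g : 'I_m -> T) : (forall k, g k \in S) ->
  sel_mx R S g *m affine_mx S p = \matrix_k row_mx (p (g k)) (1 : 'rV[R]_1).
Proof.
move=> gS; apply/row_matrixP => k; rewrite rowK.
by have [b gk] := vtx_onto (gS k); rewrite (row_sel_mul _ gk) row_affine_mx gk.
Qed.

Lemma incl_affine_mx S U p : S \subset U ->
  incl_mx R S U *m affine_mx U p = affine_mx S p.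
Proof.
move=> sSU; apply/row_matrixP => a.
have [b ab] := vtx_onto (subsetP sSU _ (vtx_in a)).
by rewrite (row_sel_mul _ ab) !row_affine_mx ab.
Qed.

Lemma general_position_rank S C p : general_position S p -> C \subset S ->
  (d.+1 <= #|C|)%N -> \rank (affine_mx C p) = d.+1.
Proof.
move=> gp sCS leC; pose f k := @vtx T C (widen_ord leC k).
have fC k : f k \in C by exact: vtx_in.
have f_inj : injective f by move=> k1 k2 /vtx_inj/(congr1 val)/= /val_inj.
have /eqP indep := gp f f_inj (fun k => subsetP sCS _ (fC k)).
apply/eqP; rewrite eqn_leq -{2}indep -(sel_affine_mx p fC).
rewrite mxrankM_maxr andbT; apply: leq_trans (rank_leq_col _) _.
by rewrite addn1.
Qed.

Lemma kermx_stress_sub S p (Om : 'M[R]_#|S|) :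
  Om^T = Om -> Om *m affine_mx S p = 0 ->
  nullity Om = d.+1 -> \rank (affine_mx S p) = d.+1 ->
  (kermx Om <= (affine_mx S p)^T)%MS.
Proof.
move=> sOm OmZ nullOm rkZ.
have sZK : ((affine_mx S p)^T <= kermx Om)%MS.
  by apply/sub_kermxP; rewrite -sOm -trmx_mul OmZ trmx0.
by rewrite -(mxrank_leqif_sup sZK).2 mxrank_tr rkZ -nullOm.
Qed.

End AffineConfiguration.

Section EdgeSets.
Variable T : finType.
Implicit Types (S e : {set T}).

Lemma card2_pair S e x : #|e| = 2%N -> e \subset S -> x \in e ->
  exists2 z, z \in S & z != x /\ e = [set x; z].
Proof.
move=> /eqP/cards2P[u [v [uv ->]]] sS; rewrite !inE.
have uS : u \in S by apply: (subsetP sS); rewrite !inE eqxx.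
have vS : v \in S by apply: (subsetP sS); rewrite !inE eqxx orbT.
case/orP=> /eqP->; first by exists v; rewrite // eq_sym.
by exists u; rewrite // setUC.
Qed.

Lemma card2_eq_pair e x y : #|e| = 2%N -> x != y -> x \in e -> y \in e ->
  e = [set x; y].
Proof.
move=> e2 xy xe ye; have [z _ [_ ez]] := card2_pair e2 (subxx e) xe.
by move: ye; rewrite ez !inE => /orP[/eqP yx|/eqP -> //]; rewrite yx eqxx in xy.
Qed.

End EdgeSets.

Section Rigidity.
Variables (R : realType) (T : finType) (d : nat).
Implicit Types (S : {set T}) (e : {set T}) (E : {set {set T}}) (p : T -> 'rV[R]_d).

Definition edge_laplacian S e : 'M[R]_#|S| :=
  \matrix_(a, b) if (vtx a \in e) && (vtx b \in e) then (-1) ^+ (a != b) else 0.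

Lemma edge_laplacian_tr S e : (edge_laplacian S e)^T = edge_laplacian S e.
Proof. by apply/matrixP => a b; rewrite !mxE andbC eq_sym. Qed.

Lemma edge_laplacian_sum S a b (g : 'I_#|S| -> R) : a != b ->
  \sum_c edge_laplacian S [set vtx a; vtx b] a c * g c = g a - g b.
Proof.
move=> ab; rewrite (bigD1 a) //= (bigD1 b) 1?eq_sym //= !mxE !inE !eqxx /=.
rewrite orbT ab mul1r mulN1r big1 ?addr0 // => c /andP[ca cb].
by rewrite mxE !inE !(inj_eq (@vtx_inj _ _)) (negbTE ca) (negbTE cb) andbF mul0r.
Qed.

Lemma edge_laplacian_sum0 S e a (g : 'I_#|S| -> R) :
  vtx a \notin e -> \sum_c edge_laplacian S e a c * g c = 0.
Proof. by move=> ae; apply: big1 => c _; rewrite mxE (negbTE ae) mul0r. Qed.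

Lemma edge_laplacian_sum_pair S e a (g : 'I_#|S| -> R) :
  e \subset S -> #|e| = 2%N -> vtx a \in e ->
  exists2 b, a != b & e = [set vtx a; vtx b] /\
    \sum_c edge_laplacian S e a c * g c = g a - g b.
Proof.
move=> eS e2 ae; have [z zS [za ez]] := card2_pair e2 eS ae.
have [b bz] := vtx_onto zS; have ab : a != b by apply: contraNneq za => ->; rewrite bz.
by exists b; rewrite // ez -bz edge_laplacian_sum.
Qed.

Lemma edge_laplacian_mul1 S e : e \subset S -> #|e| = 2%N ->
  edge_laplacian S e *m const_mx 1 = 0 :> 'M[R]_(#|S|, 1).
Proof.
move=> eS e2; apply/matrixP => a k; rewrite !mxE.
have [ae|ae] := boolP (vtx a \in e); last by rewrite edge_laplacian_sum0.
have [b _ [_ ->]] := edge_laplacian_sum_pair (fun c => const_mx 1 c k) eS e2 ae.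
by rewrite !mxE subrr.
Qed.

Lemma edge_laplacian_off S E e a b : e \in E -> #|e| = 2%N -> a != b ->
  [set vtx a; vtx b] \notin E -> edge_laplacian S e a b = 0.
Proof.
move=> eE e2 ab abE; rewrite mxE; case: ifP => // /andP[ae be].
have vab : vtx a != vtx b by rewrite (inj_eq (@vtx_inj _ _)).
by move: abE; rewrite -(card2_eq_pair e2 vab ae be) eE.
Qed.

Lemma row_rigidity_matrix S E p (r : 'I_#|E|) :
  enum_val r \subset S -> #|(enum_val r : {set T})| = 2%N ->
  row r (rigidity_matrix S E p) = mxvec (edge_laplacian S (enum_val r) *m coord_mx S p).
Proof.
move=> eS e2; rewrite rowK; congr mxvec; apply/matrixP => a k; rewrite !mxE.
have [ae|ae] := boolP (vtx a \in enum_val r); last by rewrite edge_laplacian_sum0.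
have [b ab [er ->]] := edge_laplacian_sum_pair (fun c => coord_mx S p c k) eS e2 ae.
have -> : enum_val r :\ vtx a = [set vtx b].
  apply/setP => x; rewrite er !inE; case: eqP => // ->.
  by rewrite (inj_eq (@vtx_inj _ _)) (negbTE ab).
by rewrite big_set1 !mxE.
Qed.

End Rigidity.

Section TrivialMotions.
Variables (R : realType) (T : finType) (d : nat).
Implicit Types (S : {set T}) (E : {set {set T}}) (p : T -> 'rV[R]_d).

Definition motion S p (X : 'M[R]_d) (t : 'rV[R]_d) : 'rV[R]_(#|S| * d) :=
  mxvec (coord_mx S p *m X + const_mx 1 *m t).

Lemma motion_orth S p X t (N : 'M[R]_#|S|) :
  N^T = N -> N *m const_mx 1 = 0 :> 'M_(#|S|, 1) -> X^T = - X ->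
  motion S p X t *m (mxvec (N *m coord_mx S p))^T = 0.
Proof.
move=> sN N1 skX; apply/rowP => i; rewrite ord1 [RHS]mxE mxvec_dot.
rewrite trmx_mul sN mulmxDl mxtraceD.
have -> : \tr (const_mx 1 *m t *m ((coord_mx S p)^T *m N)) = 0.
  by rewrite -mulmxA mxtrace_mulC -!mulmxA N1 !mulmx0 mxtrace0.
set P := coord_mx S p; set Y := P^T *m N *m P.
have sY : Y^T = Y by rewrite /Y !trmx_mul trmxK sN mulmxA.
rewrite addr0 -mulmxA mxtrace_mulC !mulmxA.
have -> : X *m P^T *m N *m P = X *m Y by rewrite /Y !mulmxA.
(* the trace of a symmetric times a skew matrix vanishes *)
have trN : \tr (X *m Y) = - \tr (X *m Y).
  by rewrite -[LHS]mxtrace_tr trmx_mul skX sY mulmxN raddfN mxtrace_mulC.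
by apply/eqP; rewrite -[_ == 0](@mulrn_eq0 _ _ 2) mulr2n {1}trN addNr.
Qed.

Definition coord_pairs := [set A : {set 'I_d} | #|A| == 2%N].

Definition skew_unit (A : {set 'I_d}) : 'M[R]_d :=
  \matrix_(k, l) if (k \in A) && (l \in A) then
     (if (k < l)%N then 1 else if (l < k)%N then -1 else 0) else 0.

Lemma skew_unit_tr A : (skew_unit A)^T = - skew_unit A.
Proof.
apply/matrixP => k l; rewrite !mxE andbC.
by case: (_ && _); [case: ltngtP; rewrite ?opprK ?oppr0 | rewrite oppr0].
Qed.

(* The rows span the rotations and translations of the configuration. *)
Definition trivial_motions S p : 'M[R]_(#|coord_pairs| + d, #|S| * d) :=
  col_mx (\matrix_j motion S p (skew_unit (enum_val j)) 0)
         (\matrix_k motion S p 0 (delta_mx 0 k)).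

Lemma trivial_motions_orth S p (N : 'M[R]_#|S|) :
  N^T = N -> N *m const_mx 1 = 0 :> 'M_(#|S|, 1) ->
  trivial_motions S p *m (mxvec (N *m coord_mx S p))^T = 0.
Proof.
move=> sN N1; rewrite mul_col_mx; apply/eqP; rewrite col_mx_eq0.
apply/andP; split; apply/eqP/row_matrixP => i; rewrite row_mul rowK row0.
  by apply: motion_orth => //; apply: skew_unit_tr.
by apply: motion_orth => //; rewrite trmx0 oppr0.
Qed.

Lemma skew_units_free (c : 'rV[R]_#|coord_pairs|) :
  \sum_j c 0 j *: skew_unit (enum_val j) = 0 -> c = 0.
Proof.
move=> c0; apply/rowP => j; rewrite mxE.
have /[!inE] /cards2P[k [l [kl defj]]] := enum_valP j.
wlog lt_kl : k l kl defj / (k < l)%N.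
  move=> H; case: (ltngtP k l) => [|lk|/val_inj kl']; first exact: H.
    by apply: (H l k); rewrite 1?eq_sym // defj setUC.
  by rewrite kl' eqxx in kl.
have := congr1 (fun M : 'M[R]_d => M k l) c0; rewrite summxE mxE.
rewrite (bigD1 j) //= !mxE defj !inE !eqxx orbT lt_kl mulr1 big1 ?addr0 // => j' j'j.
rewrite !mxE; case: ifP => [/andP[kj' lj']|]; last by rewrite mulr0.
have /[!inE] /eqP j'2 := enum_valP j'.
by case/eqP: j'j; apply: enum_val_inj; rewrite defj (card2_eq_pair j'2 kl kj' lj').
Qed.

Lemma trivial_motions_free S p :
  \rank (affine_mx S p) = d.+1 -> row_free (trivial_motions S p).
Proof.
move=> rkZ; rewrite -kermx_eq0; apply/rowV0P => w /sub_kermxP.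
rewrite -[w]hsubmxK; move: (lsubmx w) (rsubmx w) => c t.
set X := \sum_j c 0 j *: skew_unit (enum_val j).
have motX : c *m (\matrix_j motion S p (skew_unit (enum_val j)) 0) =
    mxvec (coord_mx S p *m X).
  rewrite mulmx_sum_row /X mulmx_sumr linear_sum; apply: eq_bigr => j _.
  by rewrite rowK /motion mulmx0 addr0 -scalemxAr linearZ.
have mott : t *m (\matrix_k motion S p 0 (delta_mx 0 k)) = mxvec (const_mx 1 *m t).
  rewrite mulmx_sum_row {2}(row_sum_delta t) mulmx_sumr linear_sum.
  by apply: eq_bigr => k _; rewrite rowK /motion mulmx0 add0r -scalemxAr linearZ.
rewrite /trivial_motions mul_row_col motX mott -linearD /= => /eqP.
rewrite mxvec_eq0 -mul_row_col => /eqP ZXt0.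
have [Z' Z'Z] : exists Z', Z' *m affine_mx S p = 1%:M.
  by apply/row_fullP; rewrite /row_full rkZ addn1.
have /eqP : col_mx X t = 0 by rewrite -[col_mx X t]mul1mx -Z'Z -mulmxA ZXt0 mulmx0.
by rewrite col_mx_eq0 => /andP[/eqP/skew_units_free -> /eqP ->]; rewrite row_mx0.
Qed.

(* Infinitesimal rigidity makes the trivial motions span the kernel of the
   rigidity matrix; the load is orthogonal to them, hence in its row space. *)
Lemma equilibrium_load_resolvable S E p (N : 'M[R]_#|S|) :
  is_graph S E -> inf_rigid S E p -> \rank (affine_mx S p) = d.+1 ->
  N^T = N -> N *m const_mx 1 = 0 :> 'M_(#|S|, 1) ->
  exists w : 'rV[R]_#|E|, mxvec (N *m coord_mx S p) = w *m rigidity_matrix S E p.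
Proof.
move=> gE rig rkZ sN N1; set Rg := rigidity_matrix S E p.
have TR0 : trivial_motions S p *m Rg^T = 0.
  apply: trmx_inj; rewrite trmx_mul trmxK trmx0.
  apply/row_matrixP => r; have [eS e2] := gE _ (enum_valP r).
  rewrite row_mul row0 row_rigidity_matrix // -[LHS]trmxK trmx_mul trmxK.
  by rewrite trivial_motions_orth ?trmx0 ?edge_laplacian_tr ?edge_laplacian_mul1.
have sTK : (trivial_motions S p <= kermx Rg^T)%MS by apply/sub_kermxP.
have leS : (d.+1 <= #|S|)%N by rewrite -rkZ rank_leq_row.
have rkT : \rank (trivial_motions S p) = 'C(d.+1, 2).
  rewrite (eqP (trivial_motions_free rkZ)) binS bin1.
  by rewrite /coord_pairs card_draws card_ord.
have rkK : \rank (kermx Rg^T) = 'C(d.+1, 2).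
  rewrite mxrank_ker mxrank_tr rig subKn // bin2 /=.
  by apply: leq_trans (leq_mul leS (leqnn d)); rewrite leq_half_double; lia.
have sKT : (kermx Rg^T <= trivial_motions S p)%MS.
  by rewrite -(mxrank_leqif_sup sTK).2 rkT rkK.
have /submxP[w ->] : (mxvec (N *m coord_mx S p) <= Rg)%MS.
  apply: submx_kermx_tr; apply: submx_trans sKT _; apply/sub_kermxP.
  exact: trivial_motions_orth.
by exists w.
Qed.

End TrivialMotions.

Section PrescribedStress.
Variables (R : realType) (T : finType) (d : nat).
Implicit Types (S : {set T}) (E F : {set {set T}}) (p : T -> 'rV[R]_d).

Definition laplacian n (W : 'M[R]_n) : 'M[R]_n :=
  W - \matrix_(a, b) ((a == b)%:R * \sum_c W a c).

Lemma laplacian_tr n (W : 'M[R]_n) : W^T = W -> (laplacian W)^T = laplacian W.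
Proof.
move=> sW; rewrite linearB /= sW; congr (_ - _); apply/matrixP => a b; rewrite !mxE.
by have [->|] := eqVneq a b; rewrite ?mul0r.
Qed.

Lemma laplacian_mul1 n (W : 'M[R]_n) : laplacian W *m const_mx 1 = 0 :> 'M_(n, 1).
Proof.
apply/matrixP => a k; rewrite !mxE; under eq_bigr do rewrite !mxE mulr1.
rewrite sumrB [X in _ - X](bigD1 a) //= eqxx mul1r [X in _ - (_ + X)]big1 ?addr0 ?subrr //.
by move=> b ba; rewrite eq_sym (negbTE ba) mul0r.
Qed.

Lemma laplacian_off n (W : 'M[R]_n) a b : a != b -> laplacian W a b = W a b.
Proof. by move=> ab; rewrite !mxE (negbTE ab) mul0r subr0. Qed.

Lemma rigidity_combination S E p (w : 'rV[R]_#|E|) : is_graph S E ->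
  let Y := \sum_r w 0 r *: edge_laplacian R S (enum_val r) in
  [/\ Y^T = Y, Y *m const_mx 1 = 0 :> 'M_(#|S|, 1),
      mxvec (Y *m coord_mx S p) = w *m rigidity_matrix S E p &
      forall a b, a != b -> [set vtx a; vtx b] \notin E -> Y a b = 0].
Proof.
move=> gE Y; split.
- by rewrite linear_sum; apply: eq_bigr => r _; rewrite linearZ /= edge_laplacian_tr.
- rewrite mulmx_suml big1 // => r _; have [eS e2] := gE _ (enum_valP r).
  by rewrite -scalemxAl edge_laplacian_mul1 // scaler0.
- rewrite mulmx_sum_row mulmx_suml linear_sum; apply: eq_bigr => r _.
  have [eS e2] := gE _ (enum_valP r).
  by rewrite -scalemxAl linearZ row_rigidity_matrix.
- move=> a b ab abE; rewrite summxE big1 // => r _; have [_ e2] := gE _ (enum_valP r).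
  by rewrite mxE (edge_laplacian_off _ _ e2 ab abE) ?mulr0 // enum_valP.
Qed.

(* Put the weights [w] on [F] and fix the diagonal so that rows sum to zero;
   the resulting load is resolved by stresses on the edges of [E], which are
   subtracted. *)
Lemma stress_with_entries S E F p (w : T -> T -> R) :
  is_graph S E -> inf_rigid S E p -> \rank (affine_mx S p) = d.+1 ->
  (forall e, e \in F -> e \notin E) -> (forall i j, w i j = w j i) ->
  exists Om : 'M[R]_#|S|, is_stress S (E :|: F) p Om /\
    forall i j, [set i; j] \in F -> i != j -> i \in S -> j \in S -> entry Om i j = w i j.
Proof.
move=> gE rig rkZ FE sw.
pose W : 'M[R]_#|S| := \matrix_(a, b) if [set vtx a; vtx b] \in F then w (vtx a) (vtx b) else 0.
have sW : W^T = W by apply/matrixP => a b; rewrite !mxE setUC sw.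
have sN := laplacian_tr sW; have N1 := laplacian_mul1 W.
have [c Nres] := equilibrium_load_resolvable gE rig rkZ sN N1.
have [sY Y1 Yres Yoff] := rigidity_combination p c gE.
set Y := \sum_r _ in sY Y1 Yres Yoff.
have eqOm : (laplacian W - Y) *m affine_mx S p = 0.
  rewrite /affine_mx mul_mx_row !(mulmxBl (laplacian W) Y) N1 Y1 subrr.
  have -> : laplacian W *m coord_mx S p = Y *m coord_mx S p.
    by apply: (can_inj mxvecK); rewrite Nres Yres.
  by rewrite subrr row_mx0.
have [sum0 eq0] := (equilibrium_affine_mxP _ _).2 eqOm.
exists (laplacian W - Y); split.
  split=> //; first by rewrite linearB /= sN sY.
  move=> a b ab; rewrite inE negb_or => /andP[abE abF].
  by rewrite mxE laplacian_off // [W a b]mxE (negbTE abF) [(- Y) a b]mxE Yoff // subrr.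
move=> i j ijF ij /vtx_onto[a ai] /vtx_onto[b bj]; subst i j.
have ab : a != b by apply: contra ij => /eqP ->.
rewrite entry_vtx mxE laplacian_off // [W a b]mxE ijF [(- Y) a b]mxE Yoff ?subr0 //.
exact: FE.
Qed.

End PrescribedStress.

Section Gluing.
Variables (R : realType) (T : finType) (d : nat) (VA VB : {set T}) (p : T -> 'rV[R]_d).
Local Notation U := (VA :|: VB).
Local Notation JA := (incl_mx R VA U).
Local Notation JB := (incl_mx R VB U).
Local Notation ZA := (affine_mx VA p).
Local Notation ZB := (affine_mx VB p).
Local Notation ZU := (affine_mx U p).
Local Notation ZC := (affine_mx (VA :&: VB) p).

Lemma incl_tr_eq0 (v : 'rV[R]_#|U|) : v *m JA^T = 0 -> v *m JB^T = 0 -> v = 0.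
Proof.
move=> vA vB; apply/rowP => b; rewrite mxE.
have /setUP[bA|bB] := vtx_in b.
  by have [a ab] := vtx_onto bA; rewrite -(mul_sel_tr v (esym ab)) vA mxE.
by have [a ab] := vtx_onto bB; rewrite -(mul_sel_tr v (esym ab)) vB mxE.
Qed.

(* A vector of [U] that is affine on [VA] and on [VB] is affine on [U], since
   the two affine maps agree on the [d + 1] affinely independent common points. *)
Lemma affine_glue (u : 'rV[R]_#|U|) : \rank ZC = d.+1 ->
  (u *m JA^T <= ZA^T)%MS -> (u *m JB^T <= ZB^T)%MS -> (u <= ZU^T)%MS.
Proof.
move=> rkC /submxP[yA uA] /submxP[yB uB].
have sCA : VA :&: VB \subset VA := subsetIl _ _.
have sCB : VA :&: VB \subset VB := subsetIr _ _.
have restrC (y : 'rV_(d + 1)) (S : {set T}) : VA :&: VB \subset S ->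
    y *m (affine_mx S p)^T *m (incl_mx R (VA :&: VB) S)^T = y *m ZC^T.
  by move=> sCS; rewrite -mulmxA -trmx_mul incl_affine_mx.
have JCA : incl_mx R (VA :&: VB) VA *m JA = incl_mx R (VA :&: VB) U.
  by apply: sel_incl => k; apply: (subsetP sCA); apply: vtx_in.
have JCB : incl_mx R (VA :&: VB) VB *m JB = incl_mx R (VA :&: VB) U.
  by apply: sel_incl => k; apply: (subsetP sCB); apply: vtx_in.
have eqy : yA = yB.
  have : (yA - yB) *m ZC^T = 0.
    rewrite mulmxBl -(restrC yA VA) // -(restrC yB VB) // -uA -uB.
    by rewrite -!mulmxA -!trmx_mul JCA JCB subrr.
  move/(congr1 trmx); rewrite trmx_mul trmxK trmx0 => ZCy.
  have [Z' Z'Z] : exists Z', Z' *m ZC = 1%:M.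
    by apply/row_fullP; rewrite /row_full rkC addn1.
  have /(congr1 trmx) : (yA - yB)^T = 0 by rewrite -[_^T]mul1mx -Z'Z -mulmxA ZCy mulmx0.
  by rewrite trmxK trmx0 => /eqP; rewrite subr_eq0 => /eqP.
apply/submxP; exists yA; apply/eqP; rewrite -subr_eq0; apply/eqP.
by apply: incl_tr_eq0; rewrite mulmxBl -mulmxA -trmx_mul incl_affine_mx
  ?subsetUl ?subsetUr // ?uA ?uB -?eqy subrr.
Qed.

Lemma glue_stress (XA : 'M[R]_#|VA|) (XB : 'M[R]_#|VB|) : \rank ZC = d.+1 ->
  XA^T = XA -> psd XA -> XA *m ZA = 0 -> (kermx XA <= ZA^T)%MS ->
  XB^T = XB -> psd XB -> XB *m ZB = 0 -> (kermx XB <= ZB^T)%MS ->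
  let Om := ext U XA + ext U XB in
  [/\ Om^T = Om, psd Om, Om *m ZU = 0 & nullity Om = d.+1].
Proof.
move=> rkC sA psdA ZA0 kA sB psdB ZB0 kB Om.
have defOm : Om = JA^T *m XA *m JA + JB^T *m XB *m JB by rewrite /Om !ext_incl.
have OmE (u : 'rV[R]_#|U|) : bform Om u u =
    bform XA (u *m JA^T) (u *m JA^T) + bform XB (u *m JB^T) (u *m JB^T).
  by rewrite defOm bformD !bform_mulmx.
have OmZ : Om *m ZU = 0.
  rewrite defOm mulmxDl -!mulmxA !incl_affine_mx ?subsetUl ?subsetUr //.
  by rewrite !mulmxA -(mulmxA _ XA) ZA0 -(mulmxA _ XB) ZB0 !mulmx0 addr0.
have sOm : Om^T = Om by rewrite defOm linearD /= !trmx_mul !trmxK sA sB !mulmxA.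
have psdOm : psd Om by move=> u; rewrite OmE addr_ge0.
have sZK : (ZU^T <= kermx Om)%MS.
  by apply/sub_kermxP; rewrite -sOm -trmx_mul OmZ trmx0.
have sKZ : (kermx Om <= ZU^T)%MS.
  apply/row_subP => i; set u := row i _.
  have /eqP : bform Om u u = 0.
    by rewrite (sub_kermxP (row_sub i (kermx Om))) mul0mx mxE.
  rewrite OmE paddr_eq0 ?psdA ?psdB // => /andP[/eqP uA /eqP uB].
  apply: affine_glue => //.
    by apply: submx_trans kA; apply/sub_kermxP; apply: psd_bform0.
  by apply: submx_trans kB; apply/sub_kermxP; apply: psd_bform0.
have rkZ : \rank ZU = d.+1.
  have sCU : VA :&: VB \subset U := subset_trans (subsetIl _ _) (subsetUl _ _).
  apply/eqP; rewrite eqn_leq -{2}rkC -(incl_affine_mx p sCU) mxrankM_maxr andbT.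
  by rewrite (leq_trans (rank_leq_col _)) ?addn1.
split=> //; apply/eqP; rewrite /nullity eqn_leq.
by rewrite -rkZ -(mxrank_tr ZU) (mxrankS sKZ) (mxrankS sZK).
Qed.

End Gluing.

Section Attachment.
Variables (R : realType) (T : finType) (d : nat).
Implicit Types (S : {set T}) (E : {set {set T}}) (p : T -> 'rV[R]_d).

Lemma entry_stress0 S E p (Om : 'M[R]_#|S|) i j :
  is_stress S E p Om -> i != j -> [set i; j] \notin E -> entry Om i j = 0.
Proof.
case=> _ Om_off _ _ ij ijE.
have [/andP[/vtx_onto[a ai] /vtx_onto[b bj]]|ijS] := boolP ((i \in S) && (j \in S)).
  subst i j; rewrite entry_vtx Om_off //; apply: contra ij => /eqP ->.
  by rewrite eqxx.
by apply: entry_out; rewrite -negb_and.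
Qed.

Lemma stress_affine_kernel S E p (Om : 'M[R]_#|S|) :
  general_position S p -> (d.+1 <= #|S|)%N -> is_stress S E p Om ->
  nullity Om = d.+1 ->
  Om *m affine_mx S p = 0 /\ (kermx Om <= (affine_mx S p)^T)%MS.
Proof.
move=> gp leS [sOm _ sum0 eq0] nullOm.
have ZOm : Om *m affine_mx S p = 0 by apply/equilibrium_affine_mxP.
split=> //; apply: kermx_stress_sub => //.
exact: general_position_rank gp (subxx S) leS.
Qed.

(* On an edge of [F] the entries of [OmK] and [OmB] cancel, and [OmA] has none. *)
Lemma attachment_entry0 (VA VB : {set T}) (EA EB F : {set {set T}})
    (pA pB : T -> 'rV[R]_d) (OmA OmK : 'M[R]_#|VA|) (OmB : 'M[R]_#|VB|) (c : R) i j :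
  is_stress VA EA pA OmA -> is_stress VA (EA :|: F) pA OmK -> is_stress VB EB pB OmB ->
  (forall i j, [set i; j] \in F -> i != j -> entry OmK i j = - entry OmB i j) ->
  (forall e, e \in F -> e \notin EA) ->
  i != j -> [set i; j] \notin (EA :|: EB) :\: F ->
  c * entry OmA i j + entry OmK i j + entry OmB i j = 0.
Proof.
move=> sA sK sB FK FEA ij; rewrite !inE negb_and negbK negb_or.
case: (boolP ([set i; j] \in F)) => [ijF _|ijF /= /andP[ijA ijB]].
  by rewrite (entry_stress0 sA ij (FEA _ ijF)) FK // mulr0 add0r addNr.
rewrite (entry_stress0 sA ij ijA) (entry_stress0 sB ij ijB).
by rewrite (entry_stress0 sK ij) ?inE ?negb_or ?ijA // mulr0 !addr0.
Qed.

End Attachment.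

Section ReducedAttachment.
Variables (R : realType) (T : finType) (d : nat).
Variables (VA VB : {set T}) (EA EB : {set {set T}}) (pA pB : T -> 'rV[R]_d).
Variables (OmA : 'M[R]_#|VA|) (OmB : 'M[R]_#|VB|).
Hypotheses (gpA : general_position VA pA) (gpB : general_position VB pB).
Hypothesis leC : (d.+1 <= #|VA :&: VB|)%N.
Hypothesis pAB : forall i, i \in VA :&: VB -> pA i = pB i.
Hypotheses (sA : is_stress VA EA pA OmA) (psdA : psd OmA) (nullA : nullity OmA = d.+1).
Hypotheses (sB : is_stress VB EB pB OmB) (psdB : psd OmB) (nullB : nullity OmB = d.+1).

Local Notation U := (VA :|: VB).
Local Notation F := [set e in EB :\: EA | e \subset VA :&: VB].
Local Notation p := (fun i => if i \in VA then pA i else pB i).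

Let leA : (d.+1 <= #|VA|)%N.
Proof. exact: leq_trans leC (subset_leq_card (subsetIl _ _)). Qed.

Let leB : (d.+1 <= #|VB|)%N.
Proof. exact: leq_trans leC (subset_leq_card (subsetIr _ _)). Qed.

Let kerA : OmA *m affine_mx VA pA = 0 /\ (kermx OmA <= (affine_mx VA pA)^T)%MS.
Proof. exact: stress_affine_kernel gpA leA sA nullA. Qed.

Let kerB : OmB *m affine_mx VB pB = 0 /\ (kermx OmB <= (affine_mx VB pB)^T)%MS.
Proof. exact: stress_affine_kernel gpB leB sB nullB. Qed.

Let F_notin_EA e : e \in F -> e \notin EA.
Proof. by rewrite !inE => /andP[/andP[]]. Qed.

Lemma cancelling_stress : is_graph VA EA -> inf_rigid VA EA pA ->
  exists OmK : 'M[R]_#|VA|, is_stress VA (EA :|: F) pA OmK /\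
    forall i j, [set i; j] \in F -> i != j -> entry OmK i j = - entry OmB i j.
Proof.
move=> gA rig; have rkA := general_position_rank gpA (subxx VA) leA.
have [sOmB _ _ _] := sB.
have [OmK [sK FK]] := stress_with_entries (w := fun i j => - entry OmB i j)
  gA rig rkA F_notin_EA (fun i j => congr1 -%R (entry_sym i j sOmB)).
exists OmK; split=> // i j ijF ij; have /subsetP ijA : [set i; j] \subset VA.
  by move: ijF; rewrite inE => /andP[_ /subset_trans]; apply; apply: subsetIl.
by apply: FK; rewrite // ijA // !inE eqxx ?orbT.
Qed.

Variable OmK : 'M[R]_#|VA|.
Hypothesis sK : is_stress VA (EA :|: F) pA OmK.
Hypothesis FK : forall i j, [set i; j] \in F -> i != j -> entry OmK i j = - entry OmB i j.

Let ZK0 : OmK *m affine_mx VA pA = 0.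
Proof. by case: sK => _ _ sum0 eq0; apply/equilibrium_affine_mxP. Qed.

Lemma kermx_sub_cancelling : (kermx OmA <= kermx OmK)%MS.
Proof.
have [_ kA] := kerA; have [sOmK _ _ _] := sK.
by apply: submx_trans kA _; apply/sub_kermxP; rewrite -sOmK -trmx_mul ZK0 trmx0.
Qed.

Lemma reduced_attachment_stress (c1 c : R) :
  psd (c1 *: OmA + OmK) -> psd (c *: OmA + OmK) -> c1 < c ->
  let Omre := c *: ext U OmA + ext U OmK + ext U OmB in
  [/\ is_stress U ((EA :|: EB) :\: F) p Omre, psd Omre & nullity Omre = d.+1].
Proof.
move=> psd_c1 psdX lt_c Omre; set X := c *: OmA + OmK.
have [ZA0 kA] := kerA; have [ZB0 kB] := kerB; have ZK := ZK0.
have [sOmA _ _ _] := sA; have [sOmB _ _ _] := sB; have [sOmK _ _ _] := sK.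
have pAE : {in VA, p =1 pA} by move=> i /= ->.
have pBE : {in VB, p =1 pB}.
  by move=> i iB /=; case: ifP => // iA; apply: pAB; rewrite inE iA.
rewrite -(eq_affine_mx pAE) in ZA0 kA ZK; rewrite -(eq_affine_mx pBE) in ZB0 kB.
have rkC : \rank (affine_mx (VA :&: VB) p) = d.+1.
  rewrite (eq_affine_mx (sub_in1 (subsetP (subsetIl VA VB)) pAE)).
  exact: general_position_rank gpA (subsetIl _ _) leC.
have sX : X^T = X by rewrite linearD linearZ /= sOmA sOmK.
have XZ0 : X *m affine_mx VA p = 0.
  by rewrite mulmxDl -scalemxAl ZA0 ZK scaler0 add0r.
have kX : (kermx X <= (affine_mx VA p)^T)%MS.
  exact: submx_trans (kermx_scale_add sOmA psdA psd_c1 lt_c) kA.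
have [sOm psdOm ZOm nullOm] := glue_stress rkC sX psdX XZ0 kX sOmB psdB ZB0 kB.
have defOm : Omre = ext U X + ext U OmB by rewrite ext_scale_add.
have [sum0 eq0] := (equilibrium_affine_mxP _ _).2 ZOm.
rewrite -defOm in sOm psdOm sum0 eq0 nullOm; split=> //; split=> // a b ab abE.
rewrite !mxE; apply: attachment_entry0 sA sK sB FK F_notin_EA _ abE.
by rewrite (inj_eq (@vtx_inj _ _)).
Qed.

End ReducedAttachment.

Theorem theorem7 (R : realType) (T : finType) (d : nat)
  (VA VB : {set T}) (EA EB : {set {set T}}) (pA pB : T -> 'rV[R]_d)
  (OmA : 'M[R]_#|VA|) (OmB : 'M[R]_#|VB|) :
  (1 <= d)%N ->
  is_graph VA EA -> is_graph VB EB ->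
  general_position VA pA -> general_position VB pB ->
  VA :&: VB \proper VA -> VA :&: VB \proper VB ->
  (d.+1 <= #|VA :&: VB|)%N ->
  (forall i, i \in VA :&: VB -> pA i = pB i) ->
  is_stress VA EA pA OmA -> psd OmA -> nullity OmA = d.+1 ->
  is_stress VB EB pB OmB -> psd OmB -> nullity OmB = d.+1 ->
  inf_rigid VA EA pA ->
  let F := [set e in EB :\: EA | e \subset VA :&: VB] in
  let p := fun i => if i \in VA then pA i else pB i in
  exists OmAK : 'M[R]_#|VA|,
    [/\ OmAK^T = OmAK,
        is_stress VA (EA :|: F) pA OmAK,
        (forall i j, [set i; j] \in F -> i != j ->
           entry OmAK i j = - entry OmB i j) &
        exists c0 : R, 0 < c0 /\ forall c : R, c0 <= c ->
          let Omre : 'M[R]_#|VA :|: VB| :=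
            c *: ext (VA :|: VB) OmA + ext (VA :|: VB) OmAK + ext (VA :|: VB) OmB in
          [/\ is_stress (VA :|: VB) ((EA :|: EB) :\: F) p Omre,
              psd Omre & nullity Omre = d.+1]].
Proof.
move=> _ gA _ gpA gpB _ _ leC pAB sA psdA nullA sB psdB nullB rig F p.
have [OmK [sK FK]] := cancelling_stress gpA leC sB gA rig.
have [sOmA _ _ _] := sA; have [sOmK _ _ _] := sK.
have [c1 [c1_ge0 psd_c]] :=
  psd_scale_add sOmA sOmK psdA (kermx_sub_cancelling gpA leC sA nullA sK).
exists OmK; split=> //; exists (c1 + 1); split=> [|c le_c]; first lra.
apply: (reduced_attachment_stress gpA gpB leC pAB sA psdA nullA sB psdB nullB sK FK
  (psd_c c1 (lexx _)) (psd_c c _)); lra.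
Qed.
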